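(* Let $\mathcal M=(V,E,c_V,L,\Theta)$ be a molecular graph with $V=\{v_1,\dots,v_n\}$, and suppose there exists $(v,w_1,w_2)\in E_2$ with $\Theta(v,w_1,w_2)\neq\pi$. Let $SO(3)$ act on $\mathcal C^P_{\mathcal M}$ by $A\cdot\varphi=A\circ\varphi$, let $\mathcal C^{int}_{\mathcal M}=\mathcal C^P_{\mathcal M}/SO(3)$ carry the quotient topology, and let $q:\mathcal C^P_{\mathcal M}\to\mathcal C^{int}_{\mathcal M}$ be the quotient map. Then $q$ is a principal $SO(3)$-bundle, and this bundle is trivial: there is an $SO(3)$-equivariant homeomorphism $\mathcal C^P_{\mathcal M}\cong \mathcal C^{int}_{\mathcal M}\times SO(3)$ commuting with the projections to $\mathcal C^{int}_{\mathcal M}$ (equivalently, $q$ admits a continuous section).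
   Context: A molecular graph is a tuple $\mathcal M=(V,E,c_V,L,\Theta)$ where: $V$ is a finite set; $E\subseteq V\times V$ satisfies $(v,v)\notin E$ and $(v,w)\in E\iff (w,v)\in E$; $c_V:V\to\mathbb N$ (the atomic number of the atom at each vertex); $L:E\to(0,\infty)$ with $L(v,w)=L(w,v)$; and $\Theta:E_2\to(0,\pi]$ with $\Theta(v,w_1,w_2)=\Theta(v,w_2,w_1)$, where $E_2=\{(v,w_1,w_2)\in V^3: (v,w_1),(v,w_2)\in E,\ w_1\neq w_2\}$. The geometric realisation of $\mathcal M$ is the metric graph obtained by gluing a segment $[0,L(e)]$ for each edge $e$ along the vertices. A configuration of $\mathcal M$ is an injective continuous map $\varphi$ from the geometric realisation into $\mathbb R^3$ such that (i) the restriction of $\varphi$ to each edge is an isometric embedding, and (ii) for each $(v,w_1,w_2)\in E_2$ the angle at $\varphi(v)$ between the segments to $\varphi(w_1)$ and $\varphi(w_2)$ equals $\Theta(v,w_1,w_2)$. A configuration is identified with $(\varphi(v_1),\dots,\varphi(v_n))\in\mathbb R^{3n}$. Define $\mathcal C^P_{\mathcal M}$ as the set of configurations satisfying $\sum_{i=1}^n c_V(v_i)\varphi(v_i)=0$, with the subspace topology from $\mathbb R^{3n}$. A principal $SO(3)$-bundle here means: $SO(3)$ acts continuously on the total space, the base is the orbit space with the quotient map as projection, the map $(x,g)\mapsto(x,g\cdot x)$ is a homeomorphism onto its image, and the projection is locally trivial by $SO(3)$-equivariant trivialisations. *)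

From Stdlib Require Import Reals Lra Lia Arith.
Open Scope R_scope.

Definition Opens (X : Type) := (X -> Prop) -> Prop.

Definition continuous {X Y : Type} (OX : Opens X) (OY : Opens Y) (f : X -> Y) : Prop :=
  forall V, OY V -> OX (fun x => V (f x)).

Definition homeomorphism {X Y : Type} (OX : Opens X) (OY : Opens Y) (f : X -> Y) : Prop :=
  exists g : Y -> X,
    (forall x, g (f x) = x) /\ (forall y, f (g y) = y) /\
    continuous OX OY f /\ continuous OY OX g.

Definition sub_open {X : Type} (OX : Opens X) (P : X -> Prop) : Opens {x : X | P x} :=
  fun V => exists U, OX U /\ forall s : {x : X | P x}, V s <-> U (proj1_sig s).

Definition prod_open {X Y : Type} (OX : Opens X) (OY : Opens Y) : Opens (X * Y) :=
  fun W => forall p, W p ->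
    exists U V, OX U /\ OY V /\ U (fst p) /\ V (snd p) /\
      forall a b, U a -> V b -> W (a, b).

Definition quot_open {X Y : Type} (OX : Opens X) (q : X -> Y) : Opens Y :=
  fun O => OX (fun x => O (q x)).

Definition image_of {X Y : Type} (f : X -> Y) : Y -> Prop := fun y => exists x, y = f x.
Definition corestr {X Y : Type} (f : X -> Y) (x : X) : {y : Y | image_of f y} :=
  exist _ (f x) (ex_intro _ x eq_refl).
Definition homeo_onto_image {X Y : Type} (OX : Opens X) (OY : Opens Y) (f : X -> Y) : Prop :=
  homeomorphism OX (sub_open OY (image_of f)) (corestr f).

Definition R3 : Type := (R * R * R)%type.
Definition zero3 : R3 := (0, 0, 0).
Definition add3 (a b : R3) : R3 :=
  match a, b with (a1, a2, a3), (b1, b2, b3) => (a1 + b1, a2 + b2, a3 + b3) end.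
Definition scal3 (k : R) (a : R3) : R3 :=
  match a with (a1, a2, a3) => (k * a1, k * a2, k * a3) end.
Definition sub3 (a b : R3) : R3 := add3 a (scal3 (-1) b).
Definition dot3 (a b : R3) : R :=
  match a, b with (a1, a2, a3), (b1, b2, b3) => a1 * b1 + a2 * b2 + a3 * b3 end.
Definition cross3 (a b : R3) : R3 :=
  match a, b with (a1, a2, a3), (b1, b2, b3) =>
    (a2 * b3 - a3 * b2, a3 * b1 - a1 * b3, a1 * b2 - a2 * b1) end.
Definition norm3 (a : R3) : R := sqrt (dot3 a a).
Definition dist3 (a b : R3) : R := norm3 (sub3 a b).

Definition angle3 (a b c : R3) : R :=
  acos (dot3 (sub3 b a) (sub3 c a) / (norm3 (sub3 b a) * norm3 (sub3 c a))).

(* a 3x3 real matrix, given by its three rows *)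
Definition Mat3 : Type := (R3 * R3 * R3)%type.
Definition mat_vec (A : Mat3) (v : R3) : R3 :=
  match A with (r1, r2, r3) => (dot3 r1 v, dot3 r2 v, dot3 r3 v) end.
(* row i of A*B = sum_k A_ik (row k of B) *)
Definition mat_mul (A B : Mat3) : Mat3 :=
  match B with (b1, b2, b3) =>
    let row := fun a : R3 => match a with (x, y, z) =>
                 add3 (add3 (scal3 x b1) (scal3 y b2)) (scal3 z b3) end in
    match A with (a1, a2, a3) => (row a1, row a2, row a3) end end.
Definition det3 (A : Mat3) : R :=
  match A with (r1, r2, r3) => dot3 r1 (cross3 r2 r3) end.
(* A A^T = I, i.e. the rows are orthonormal *)
Definition orthogonal3 (A : Mat3) : Prop :=
  match A with (r1, r2, r3) =>
    dot3 r1 r1 = 1 /\ dot3 r2 r2 = 1 /\ dot3 r3 r3 = 1 /\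
    dot3 r1 r2 = 0 /\ dot3 r1 r3 = 0 /\ dot3 r2 r3 = 0 end.
Definition is_SO3 (A : Mat3) : Prop := orthogonal3 A /\ det3 A = 1.
Definition SO3 : Type := {A : Mat3 | is_SO3 A}.

Definition mdist (A B : Mat3) : R :=
  match A, B with (a1, a2, a3), (b1, b2, b3) =>
    sqrt (dot3 (sub3 a1 b1) (sub3 a1 b1) + dot3 (sub3 a2 b2) (sub3 a2 b2)
          + dot3 (sub3 a3 b3) (sub3 a3 b3)) end.
Definition mat_open : Opens Mat3 :=
  fun U => forall A, U A -> exists eps, eps > 0 /\ forall B, mdist A B < eps -> U B.
Definition SO3_open : Opens SO3 := sub_open mat_open is_SO3.

(* the vertex set V = {v_1,...,v_n}, indexed by {0,...,n-1} *)
Definition Idx (n : nat) : Type := {i : nat | (i < n)%nat}.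

(* a point of R^{3n} = (R^3)^n *)
Definition Conf (n : nat) : Type := Idx n -> R3.

Definition conf_open (n : nat) : Opens (Conf n) :=
  fun U => forall x, U x -> exists eps, eps > 0 /\
    forall y : Conf n, (forall i, dist3 (x i) (y i) < eps) -> U y.

Definition ext_idx {n : nat} {A : Type} (d : A) (f : Idx n -> A) (i : nat) : A :=
  match Compare_dec.lt_dec i n with
  | left h => f (exist _ i h)
  | right _ => d
  end.
Fixpoint sum3_upto (k : nat) (f : nat -> R3) : R3 :=
  match k with O => zero3 | S k' => add3 (sum3_upto k' f) (f k') end.
Definition sum_idx (n : nat) (f : Idx n -> R3) : R3 := sum3_upto n (ext_idx zero3 f).

(* M = (V, E, c_V, L, Theta) with V = Idx n; L and Theta are total
   functions, only their values on E resp. E_2 matter. *)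
Definition in_E2 {n} (E : Idx n -> Idx n -> Prop) (v w1 w2 : Idx n) : Prop :=
  E v w1 /\ E v w2 /\ w1 <> w2.

Definition is_molecular_graph (n : nat) (E : Idx n -> Idx n -> Prop)
    (c : Idx n -> nat) (L : Idx n -> Idx n -> R)
    (Th : Idx n -> Idx n -> Idx n -> R) : Prop :=
  (forall v, ~ E v v) /\
  (forall v w, E v w <-> E w v) /\
  (forall v w, E v w -> 0 < L v w /\ L v w = L w v) /\
  (forall v w1 w2, in_E2 E v w1 w2 ->
      0 < Th v w1 w2 <= PI /\ Th v w1 w2 = Th v w2 w1).

(* Points of the geometric realisation: vertices u, and points (v,w,t)
   of the segment [0, L(v,w)] of the edge (v,w); the point (v,w,t) is
   identified with (w,v,L(v,w)-t), (v,w,0) with v and (v,w,L(v,w)) with w. *)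
Definition is_endpoint {n} (L : Idx n -> Idx n -> R) (v w : Idx n) (t : R) (u : Idx n) : Prop :=
  (t = 0 /\ u = v) \/ (t = L v w /\ u = w).

Definition same_real_pt {n} (L : Idx n -> Idx n -> R)
    (v w : Idx n) (t : R) (v' w' : Idx n) (t' : R) : Prop :=
  (exists u, is_endpoint L v w t u /\ is_endpoint L v' w' t' u) \/
  (v = v' /\ w = w' /\ t = t') \/
  (v = w' /\ w = v' /\ t = L v w - t').

(* x : Conf n is (the vertex tuple of) a configuration: there is a map
   phi of the geometric realisation (given edgewise by phi v w on
   [0, L v w], with vertex values x) which is well defined, continuous,
   injective, isometric on each edge, and realises the bond angles. *)
Definition is_configuration (n : nat) (E : Idx n -> Idx n -> Prop)
    (L : Idx n -> Idx n -> R) (Th : Idx n -> Idx n -> Idx n -> R) (x : Conf n) : Prop :=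
  exists phi : Idx n -> Idx n -> R -> R3,
    (* well defined on the glued space *)
    (forall v w, E v w ->
        phi v w 0 = x v /\ phi v w (L v w) = x w /\
        forall t, 0 <= t <= L v w -> phi v w t = phi w v (L v w - t)) /\
    (forall v w, E v w -> forall s, 0 <= s <= L v w -> forall eps, eps > 0 ->
        exists delta, delta > 0 /\ forall t, 0 <= t <= L v w -> Rabs (t - s) < delta ->
          dist3 (phi v w t) (phi v w s) < eps) /\
    (forall v w, E v w -> forall s t, 0 <= s <= L v w -> 0 <= t <= L v w ->
        dist3 (phi v w s) (phi v w t) = Rabs (s - t)) /\
    (forall u u', x u = x u' -> u = u') /\
    (forall v w t u, E v w -> 0 <= t <= L v w -> phi v w t = x u -> is_endpoint L v w t u) /\
    (forall v w t v' w' t', E v w -> E v' w' -> 0 <= t <= L v w -> 0 <= t' <= L v' w' ->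
        phi v w t = phi v' w' t' -> same_real_pt L v w t v' w' t') /\
    (forall v w1 w2, in_E2 E v w1 w2 -> angle3 (x v) (x w1) (x w2) = Th v w1 w2).

Definition in_CP (n : nat) (E : Idx n -> Idx n -> Prop) (c : Idx n -> nat)
    (L : Idx n -> Idx n -> R) (Th : Idx n -> Idx n -> Idx n -> R) (x : Conf n) : Prop :=
  is_configuration n E L Th x /\
  sum_idx n (fun i => scal3 (INR (c i)) (x i)) = zero3.

Definition CP (n : nat) E c L Th : Type := {x : Conf n | in_CP n E c L Th x}.
Definition CP_open (n : nat) E c L Th : Opens (CP n E c L Th) :=
  sub_open (conf_open n) (in_CP n E c L Th).

Definition rot_conf {n} (A : SO3) (x : Conf n) : Conf n :=
  fun i => mat_vec (proj1_sig A) (x i).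

Definition orbit {n} E c L Th (x : CP n E c L Th) : CP n E c L Th -> Prop :=
  fun y => exists A : SO3, proj1_sig y = rot_conf A (proj1_sig x).
Definition Cint (n : nat) E c L Th : Type :=
  {O : CP n E c L Th -> Prop | exists x, O = orbit E c L Th x}.
Definition qmap {n} E c L Th (x : CP n E c L Th) : Cint n E c L Th :=
  exist _ (orbit E c L Th x) (ex_intro _ x eq_refl).
Definition Cint_open (n : nat) E c L Th : Opens (Cint n E c L Th) :=
  quot_open (CP_open n E c L Th) (qmap E c L Th).

(* q : P -> B with SO(3)-action act on P (B is by construction the orbit
   space with the quotient map). *)
Definition principal_SO3_bundle {P B : Type} (OP : Opens P) (OB : Opens B)
    (act : SO3 -> P -> P) (q : P -> B) : Prop :=
  continuous (prod_open SO3_open OP) OP (fun p => act (fst p) (snd p)) /\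
  homeo_onto_image (prod_open OP SO3_open) (prod_open OP OP)
    (fun p => (fst p, act (snd p) (fst p))) /\
  (forall b : B, exists U : B -> Prop, OB U /\ U b /\
     exists psi : {x : P | U (q x)} -> ({b' : B | U b'} * SO3),
       homeomorphism (sub_open OP (fun x => U (q x)))
                     (prod_open (sub_open OB U) SO3_open) psi /\
       (forall x, proj1_sig (fst (psi x)) = q (proj1_sig x)) /\
       (forall (g : SO3) x x', proj1_sig x' = act g (proj1_sig x) ->
          proj1_sig (snd (psi x')) = mat_mul (proj1_sig g) (proj1_sig (snd (psi x))))).

Definition trivial_SO3_bundle {P B : Type} (OP : Opens P) (OB : Opens B)
    (act : SO3 -> P -> P) (q : P -> B) : Prop :=
  exists Psi : P -> B * SO3,
    homeomorphism OP (prod_open OB SO3_open) Psi /\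
    (forall x, fst (Psi x) = q x) /\
    (forall (g : SO3) x,
       proj1_sig (snd (Psi (act g x))) = mat_mul (proj1_sig g) (proj1_sig (snd (Psi x)))).

(* Pick a bond angle (v, w1, w2) different from pi.  In every
   configuration x the bond vectors a = x(w1) - x(v) and b = x(w2) - x(v) are
   non-zero and not collinear, so they determine an orthonormal frame
   F(x) = (a/|a|, e3 x a/|a|, e3) in SO(3) with e3 = (a x b)/|a x b|.  The frame
   is continuous and equivariant, F(g.x) = g F(x).  For any SO(3)-space with
   such a map, x |-> (orbit of x, F(x)) is an equivariant homeomorphism onto
   (orbit space) x SO(3): its inverse sends (b, g) to g applied to the unique
   point of the orbit b with identity frame.  Local triviality and the
   embedding property of (x, g) |-> (x, g.x) then follow formally. *)

From Stdlib Require Import Reals Lra Lia Psatz.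
From Stdlib Require Import FunctionalExtensionality PropExtensionality ProofIrrelevance ClassicalEpsilon.
Open Scope R_scope.

Ltac destruct3 u := let a := fresh "a" in let b := fresh "b" in let c := fresh "c" in
  destruct u as [[a b] c].

Ltac split_triples := repeat match goal with |- (_, _) = (_, _) => apply f_equal2 end.

Lemma dot3_comm u v : dot3 u v = dot3 v u.
Proof. destruct3 u; destruct3 v; simpl; ring. Qed.

Lemma dot3_ge0 u : 0 <= dot3 u u.
Proof. destruct3 u; simpl; nra. Qed.

Lemma norm3_sq u : norm3 u * norm3 u = dot3 u u.
Proof. apply sqrt_sqrt, dot3_ge0. Qed.

Lemma dot3_scal_l k u v : dot3 (scal3 k u) v = k * dot3 u v.
Proof. destruct3 u; destruct3 v; simpl; ring. Qed.

Lemma dot3_scal_r k u v : dot3 u (scal3 k v) = k * dot3 u v.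
Proof. destruct3 u; destruct3 v; simpl; ring. Qed.

Lemma dot3_cross_l u v : dot3 u (cross3 u v) = 0.
Proof. destruct3 u; destruct3 v; simpl; ring. Qed.

Lemma dot3_cross_r u v : dot3 v (cross3 u v) = 0.
Proof. destruct3 u; destruct3 v; simpl; ring. Qed.

Lemma dot3_cross_cross p q u v :
  dot3 (cross3 p q) (cross3 u v) = dot3 p u * dot3 q v - dot3 p v * dot3 q u.
Proof. destruct3 p; destruct3 q; destruct3 u; destruct3 v; simpl; ring. Qed.

(* Cauchy-Schwarz, from Lagrange's identity. *)
Lemma dot3_le_norm p q : dot3 p q <= norm3 p * norm3 q.
Proof.
  pose proof (dot3_ge0 (cross3 p q)) as Hl.
  rewrite dot3_cross_cross, (dot3_comm q p), <- !norm3_sq in Hl.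
  assert (0 <= norm3 p * norm3 q) by (apply Rmult_le_pos; apply sqrt_pos).
  set (d := dot3 p q) in *; set (m := norm3 p * norm3 q) in *.
  assert (d * d <= m * m) by (unfold m; lra).
  nra.
Qed.

Lemma dot3_zero u : dot3 u u = 0 -> u = zero3.
Proof.
  destruct3 u; simpl; intros H; unfold zero3.
  assert (a = 0) by nra; assert (b = 0) by nra; assert (c = 0) by nra; subst; reflexivity.
Qed.

Lemma sub3_zero u v : sub3 u v = zero3 -> u = v.
Proof.
  destruct3 u; destruct3 v; unfold zero3; simpl; intros H; injection H as H1 H2 H3.
  split_triples; lra.
Qed.

Definition transp (A : Mat3) : Mat3 :=
  match A with ((a1, a2, a3), (b1, b2, b3), (c1, c2, c3)) =>
    ((a1, b1, c1), (a2, b2, c2), (a3, b3, c3)) end.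
Definition I3 : Mat3 := ((1, 0, 0), (0, 1, 0), (0, 0, 1)).

Ltac destruct_mat A := let r1 := fresh "r" in let r2 := fresh "r" in let r3 := fresh "r" in
  destruct A as [[r1 r2] r3]; destruct3 r1; destruct3 r2; destruct3 r3.

Lemma mat_vec_add A u v : mat_vec A (add3 u v) = add3 (mat_vec A u) (mat_vec A v).
Proof. destruct_mat A; destruct3 u; destruct3 v; simpl; split_triples; ring. Qed.

Lemma mat_vec_scal A k u : mat_vec A (scal3 k u) = scal3 k (mat_vec A u).
Proof. destruct_mat A; destruct3 u; simpl; split_triples; ring. Qed.

Lemma mat_vec_sub A u v : mat_vec A (sub3 u v) = sub3 (mat_vec A u) (mat_vec A v).
Proof. unfold sub3; rewrite mat_vec_add, mat_vec_scal; reflexivity. Qed.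

Lemma mat_vec_zero A : mat_vec A zero3 = zero3.
Proof. destruct_mat A; unfold zero3; simpl; split_triples; ring. Qed.

Lemma mat_vec_mul A B u : mat_vec (mat_mul A B) u = mat_vec A (mat_vec B u).
Proof. destruct_mat A; destruct_mat B; destruct3 u; simpl; split_triples; ring. Qed.

Lemma mat_vec_I3 u : mat_vec I3 u = u.
Proof. destruct3 u; simpl; split_triples; ring. Qed.

Lemma mat_mul_assoc A B C : mat_mul (mat_mul A B) C = mat_mul A (mat_mul B C).
Proof. destruct_mat A; destruct_mat B; destruct_mat C; simpl; split_triples; ring. Qed.

Lemma mat_mul_I3_r A : mat_mul A I3 = A.
Proof. destruct_mat A; simpl; split_triples; ring. Qed.

Lemma det3_mul A B : det3 (mat_mul A B) = det3 A * det3 B.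
Proof. destruct_mat A; destruct_mat B; simpl; ring. Qed.

Lemma transp_transp A : transp (transp A) = A.
Proof. destruct_mat A; reflexivity. Qed.

Lemma transp_mul A B : transp (mat_mul A B) = mat_mul (transp B) (transp A).
Proof. destruct_mat A; destruct_mat B; simpl; split_triples; ring. Qed.

Lemma mat_mul_rows A B : mat_mul A B =
  match A with (a1, a2, a3) =>
    (mat_vec (transp B) a1, mat_vec (transp B) a2, mat_vec (transp B) a3) end.
Proof. destruct_mat A; destruct_mat B; simpl; split_triples; ring. Qed.

Lemma so3_third_row r1 r2 r3 : is_SO3 (r1, r2, r3) -> r3 = cross3 r1 r2.
Proof.
  intros [[H1 [H2 [H3 [H12 [H13 H23]]]]] Hdet]; simpl in Hdet.
  apply sub3_zero, dot3_zero.
  assert (Hc : dot3 (cross3 r1 r2) (cross3 r1 r2) = 1).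
  { rewrite dot3_cross_cross, H1, H2, (dot3_comm r2 r1), H12; ring. }
  assert (Hd : dot3 r3 (cross3 r1 r2) = 1).
  { rewrite <- Hdet; destruct3 r1; destruct3 r2; destruct3 r3; simpl; ring. }
  replace (dot3 (sub3 r3 (cross3 r1 r2)) (sub3 r3 (cross3 r1 r2)))
    with (dot3 r3 r3 - 2 * dot3 r3 (cross3 r1 r2) + dot3 (cross3 r1 r2) (cross3 r1 r2))
    by (destruct3 r1; destruct3 r2; destruct3 r3; simpl; ring).
  rewrite H3, Hd, Hc; ring.
Qed.

(* Columns of a rotation are orthonormal: each column identity is a polynomial
   combination (with the displayed multipliers) of the row relations. *)
Lemma so3_transp A : is_SO3 A -> is_SO3 (transp A).
Proof.
  intros HA. destruct A as [[r1 r2] r3].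
  pose proof (so3_third_row _ _ _ HA) as ->.
  destruct HA as [[H1 [H2 [_ [H12 _]]]] _].
  destruct3 r1; destruct3 r2; simpl in *.
  assert (comb : forall g P Q S m1 m2 m3 : R,
            P = 0 -> Q = 0 -> S = 0 -> g = m1 * P + m2 * Q + m3 * S -> g = 0)
    by (intros * -> -> -> ->; ring).
  set (P := a * a + b * b + c * c - 1); set (Q := a0 * a0 + b0 * b0 + c0 * c0 - 1);
  set (S := a * a0 + b * b0 + c * c0).
  assert (HP : P = 0) by (unfold P; lra); assert (HQ : Q = 0) by (unfold Q; lra);
  assert (HS : S = 0) by (unfold S; lra).
  repeat split; simpl; apply Rminus_diag_uniq.
  - apply (comb _ P Q S (1 - a0 * a0 + Q) (1 - a * a) (- (S - 2 * a * a0))); auto; unfold P, Q, S; ring.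
  - apply (comb _ P Q S (1 - b0 * b0 + Q) (1 - b * b) (- (S - 2 * b * b0))); auto; unfold P, Q, S; ring.
  - apply (comb _ P Q S (1 - c0 * c0 + Q) (1 - c * c) (- (S - 2 * c * c0))); auto; unfold P, Q, S; ring.
  - apply (comb _ P Q S (- (a0 * b0)) (- (a * b)) (a0 * b + a * b0)); auto; unfold P, Q, S; ring.
  - apply (comb _ P Q S (- (c0 * a0)) (- (c * a)) (c0 * a + c * a0)); auto; unfold P, Q, S; ring.
  - apply (comb _ P Q S (- (b0 * c0)) (- (b * c)) (b0 * c + b * c0)); auto; unfold P, Q, S; ring.
  - apply (comb _ P Q S (a0 * a0 + b0 * b0 + c0 * c0) 1 (- S)); auto;
      unfold P, Q, S; ring.
Qed.

Lemma so3_rotate_rows r1 r2 r3 : is_SO3 (r1, r2, r3) -> is_SO3 (r2, r3, r1).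
Proof.
  intros [[H1 [H2 [H3 [H12 [H13 H23]]]]] Hdet]; simpl in *.
  repeat split; auto; try (rewrite dot3_comm; auto; fail).
  rewrite <- Hdet; destruct3 r1; destruct3 r2; destruct3 r3; simpl; ring.
Qed.

Lemma so3_mul_transp_r A : is_SO3 A -> mat_mul A (transp A) = I3.
Proof.
  destruct_mat A. intros [[H1 [H2 [H3 [H12 [H13 H23]]]]] _]; simpl in *.
  unfold I3; split_triples; lra.
Qed.

Lemma so3_mul_transp_l A : is_SO3 A -> mat_mul (transp A) A = I3.
Proof.
  intros HA. rewrite <- (transp_transp A) at 2. apply so3_mul_transp_r, so3_transp, HA.
Qed.

Lemma dot3_mat_vec A u w : dot3 (mat_vec A u) w = dot3 u (mat_vec (transp A) w).
Proof. destruct_mat A; destruct3 u; destruct3 w; simpl; ring. Qed.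

Lemma so3_dot A u v : is_SO3 A -> dot3 (mat_vec A u) (mat_vec A v) = dot3 u v.
Proof.
  intros HA. rewrite dot3_mat_vec, <- mat_vec_mul, so3_mul_transp_l, mat_vec_I3; auto.
Qed.

Lemma so3_norm A u : is_SO3 A -> norm3 (mat_vec A u) = norm3 u.
Proof. intros HA; unfold norm3; rewrite so3_dot; auto. Qed.

Lemma so3_dist A u v : is_SO3 A -> dist3 (mat_vec A u) (mat_vec A v) = dist3 u v.
Proof. intros HA; unfold dist3; rewrite <- mat_vec_sub; apply so3_norm, HA. Qed.

Lemma so3_angle A p q r : is_SO3 A ->
  angle3 (mat_vec A p) (mat_vec A q) (mat_vec A r) = angle3 p q r.
Proof. intros HA; unfold angle3; rewrite <- !mat_vec_sub, !so3_dot, !so3_norm; auto. Qed.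

Lemma so3_inj A p q : is_SO3 A -> mat_vec A p = mat_vec A q -> p = q.
Proof.
  intros HA H. rewrite <- (mat_vec_I3 p), <- (mat_vec_I3 q), <- (so3_mul_transp_l A HA),
    !mat_vec_mul, H; reflexivity.
Qed.

(* Rotations commute with the cross product: each row of a rotation is the
   cross product of the two cyclically following rows. *)
Lemma so3_cross A u v : is_SO3 A ->
  mat_vec A (cross3 u v) = cross3 (mat_vec A u) (mat_vec A v).
Proof.
  intros HA. destruct A as [[r1 r2] r3].
  pose proof (so3_rotate_rows _ _ _ HA) as HA'.
  pose proof (so3_third_row _ _ _ HA) as E3.
  pose proof (so3_third_row _ _ _ HA') as E1.
  pose proof (so3_third_row _ _ _ (so3_rotate_rows _ _ _ HA')) as E2.
  cbn [mat_vec]. unfold cross3 at 4. split_triples.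
  - rewrite E1, dot3_cross_cross; ring.
  - rewrite E2, dot3_cross_cross; ring.
  - rewrite E3, dot3_cross_cross; ring.
Qed.

Lemma so3_I3 : is_SO3 I3.
Proof. repeat split; simpl; ring. Qed.

Lemma so3_mul A B : is_SO3 A -> is_SO3 B -> is_SO3 (mat_mul A B).
Proof.
  intros HA HB. split; [|rewrite det3_mul, (proj2 HA), (proj2 HB); ring].
  rewrite mat_mul_rows. pose proof (so3_transp B HB) as HT.
  destruct A as [[r1 r2] r3]. destruct HA as [[H1 [H2 [H3 [H12 [H13 H23]]]]] _].
  simpl. rewrite !so3_dot by exact HT. repeat split; auto.
Qed.

Lemma sig_eq {A : Type} {P : A -> Prop} (x y : {a : A | P a}) : proj1_sig x = proj1_sig y -> x = y.
Proof. destruct x, y; simpl; intros; subst; f_equal; apply proof_irrelevance. Qed.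

Definition rot_one : SO3 := exist _ I3 so3_I3.
Definition rot_mul (A B : SO3) : SO3 :=
  exist _ (mat_mul (proj1_sig A) (proj1_sig B)) (so3_mul _ _ (proj2_sig A) (proj2_sig B)).
Definition rot_inv (A : SO3) : SO3 := exist _ (transp (proj1_sig A)) (so3_transp _ (proj2_sig A)).


Lemma rot_mul_assoc A B C : rot_mul (rot_mul A B) C = rot_mul A (rot_mul B C).
Proof. apply sig_eq, mat_mul_assoc. Qed.

Lemma rot_mul_one_r A : rot_mul A rot_one = A.
Proof. apply sig_eq, mat_mul_I3_r. Qed.

Lemma rot_mul_inv_r A : rot_mul A (rot_inv A) = rot_one.
Proof. apply sig_eq, so3_mul_transp_r, proj2_sig. Qed.

Lemma rot_mul_inv_l A : rot_mul (rot_inv A) A = rot_one.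
Proof. apply sig_eq, so3_mul_transp_l, proj2_sig. Qed.

Lemma rot_inv_mul A B : rot_inv (rot_mul A B) = rot_mul (rot_inv B) (rot_inv A).
Proof. apply sig_eq, transp_mul. Qed.

(** The orthonormal frame of a non-degenerate pair of vectors *)

Definition normalize (u : R3) : R3 := scal3 (/ norm3 u) u.

(* Columns: e1 = a/|a|, e2 = e3 x e1, e3 = (a x b)/|a x b|.  We first give the
   rows (the transposed frame). *)
Definition frame_rows (a b : R3) : Mat3 :=
  let e1 := normalize a in let e3 := normalize (cross3 a b) in (e1, cross3 e3 e1, e3).
Definition frame (a b : R3) : Mat3 := transp (frame_rows a b).

Lemma normalize_unit u : norm3 u <> 0 -> dot3 (normalize u) (normalize u) = 1.
Proof.
  intros H. unfold normalize. rewrite dot3_scal_l, dot3_scal_r, <- norm3_sq. field; auto.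
Qed.

Lemma frame_SO3 a b : norm3 a <> 0 -> norm3 (cross3 a b) <> 0 -> is_SO3 (frame a b).
Proof.
  intros Ha Hc. apply so3_transp. unfold frame_rows.
  set (e1 := normalize a). set (e3 := normalize (cross3 a b)).
  assert (U1 : dot3 e1 e1 = 1) by (apply normalize_unit; auto).
  assert (U3 : dot3 e3 e3 = 1) by (apply normalize_unit; auto).
  assert (O13 : dot3 e1 e3 = 0).
  { unfold e1, e3, normalize. rewrite dot3_scal_l, dot3_scal_r, dot3_cross_l. ring. }
  split; [repeat split|].
  - exact U1.
  - rewrite dot3_cross_cross, U1, U3, (dot3_comm e3 e1), O13; ring.
  - exact U3.
  - apply dot3_cross_r.
  - exact O13.
  - rewrite dot3_comm; apply dot3_cross_l.
  - simpl det3.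
    replace (dot3 e1 (cross3 (cross3 e3 e1) e3)) with (dot3 e1 e1 * dot3 e3 e3 - dot3 e1 e3 * dot3 e1 e3)
      by (destruct3 e1; destruct3 e3; simpl; ring).
    rewrite U1, U3, O13; ring.
Qed.

Lemma normalize_equiv g u : is_SO3 g -> mat_vec g (normalize u) = normalize (mat_vec g u).
Proof. intros H; unfold normalize; rewrite mat_vec_scal, so3_norm; auto. Qed.

Lemma frame_equiv g a b : is_SO3 g ->
  frame (mat_vec g a) (mat_vec g b) = mat_mul g (frame a b).
Proof.
  intros Hg. unfold frame.
  replace (frame_rows (mat_vec g a) (mat_vec g b)) with (mat_mul (frame_rows a b) (transp g)).
  { rewrite transp_mul, transp_transp; reflexivity. }
  rewrite mat_mul_rows, transp_transp. unfold frame_rows.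
  rewrite <- so3_cross, <- !normalize_equiv, <- so3_cross by exact Hg. reflexivity.
Qed.

Lemma norm3_zero u : norm3 u = 0 -> u = zero3.
Proof. intros H; apply dot3_zero; rewrite <- norm3_sq, H; ring. Qed.

Lemma cross3_nonzero a b : a <> zero3 -> b <> zero3 ->
  acos (dot3 a b / (norm3 a * norm3 b)) <> 0 -> acos (dot3 a b / (norm3 a * norm3 b)) <> PI ->
  norm3 (cross3 a b) <> 0.
Proof.
  intros Ha Hb H0 Hpi Hc. apply norm3_zero in Hc.
  assert (Hl : dot3 (cross3 a b) (cross3 a b) = 0) by (rewrite Hc; simpl; ring).
  rewrite dot3_cross_cross, <- !norm3_sq, (dot3_comm b a) in Hl.
  assert (Na : norm3 a <> 0) by (intro H; apply Ha, norm3_zero, H).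
  assert (Nb : norm3 b <> 0) by (intro H; apply Hb, norm3_zero, H).
  set (k := dot3 a b / (norm3 a * norm3 b)) in *.
  assert (Hk : k * k = 1).
  { unfold k. set (d := dot3 a b) in *.
    replace (d / (norm3 a * norm3 b) * (d / (norm3 a * norm3 b)))
      with ((d * d) / (norm3 a * norm3 a * (norm3 b * norm3 b))) by (field; auto).
    replace (d * d) with (norm3 a * norm3 a * (norm3 b * norm3 b)) by lra.
    field; auto. }
  assert (Hk' : k = 1 \/ k = -1) by nra.
  destruct Hk' as [-> | ->].
  - apply H0, acos_1.
  - apply Hpi. unfold acos. destruct (Rle_dec (-1) (-1)); [reflexivity | lra].
Qed.

(** Ball spaces *)

(* A type with balls [ball x y e] ("y lies in the e-ball around x") such that
   balls are open; [ball_open] is the topology they generate.  All spaces of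
   the theorem (R^3, matrices, configurations, SO(3), subspaces, products) are
   of this kind, which reduces every continuity statement to epsilon-delta. *)
Record BallSpace := {
  pts :> Type;
  ball : pts -> pts -> R -> Prop;
  ball_center : forall x e, e > 0 -> ball x x e;
  ball_mono : forall x y e e', ball x y e -> e <= e' -> ball x y e';
  ball_nbhd : forall x y e, ball x y e -> exists d, d > 0 /\ forall z, ball y z d -> ball x z e }.
Arguments ball {_}.

Definition ball_open (X : BallSpace) : Opens X :=
  fun U => forall x, U x -> exists e, e > 0 /\ forall y, ball x y e -> U y.

Lemma ball_is_open (X : BallSpace) (x : X) e : ball_open X (fun y => ball x y e).
Proof. intros y Hy; exact (ball_nbhd X x y e Hy). Qed.

Program Definition MetricBS (T : Type) (d : T -> T -> R)
  (d_refl : forall x, d x x = 0) (d_tri : forall x y z, d x z <= d x y + d y z) : BallSpace :=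
  {| pts := T; ball := fun x y e => d x y < e |}.
Next Obligation. rewrite d_refl; lra. Qed.
Next Obligation. lra. Qed.
Next Obligation.
  exists (e - d x y); split; [lra|]. intros z Hz. pose proof (d_tri x y z). lra.
Qed.

Program Definition SubBS (X : BallSpace) (P : X -> Prop) : BallSpace :=
  {| pts := {x : X | P x}; ball := fun s t e => ball (proj1_sig s) (proj1_sig t) e |}.
Next Obligation. apply ball_center; auto. Qed.
Next Obligation. eapply ball_mono; eauto. Qed.
Next Obligation. destruct (ball_nbhd _ _ _ _ H) as [d [Hd K]]. exists d; split; auto. Qed.

Program Definition ProdBS (X Y : BallSpace) : BallSpace :=
  {| pts := (X * Y)%type;
     ball := fun p q e => ball (fst p) (fst q) e /\ ball (snd p) (snd q) e |}.
Next Obligation. split; apply ball_center; auto. Qed.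
Next Obligation. split; eapply ball_mono; eauto. Qed.
Next Obligation.
  destruct (ball_nbhd _ _ _ _ H) as [d1 [Hd1 K1]], (ball_nbhd _ _ _ _ H0) as [d2 [Hd2 K2]].
  exists (Rmin d1 d2); split; [apply Rmin_glb_lt; auto|].
  intros z [Z1 Z2]; split; [apply K1 | apply K2]; eapply ball_mono; eauto;
    [apply Rmin_l | apply Rmin_r].
Qed.

Lemma sub_open_ball (X : BallSpace) (P : X -> Prop) :
  sub_open (ball_open X) P = ball_open (SubBS X P).
Proof.
  apply functional_extensionality; intros V; apply propositional_extensionality; split.
  - intros [U [HU HV]] s Hs. apply HV in Hs. destruct (HU _ Hs) as [e [He K]].
    exists e; split; auto. intros t Ht. apply HV, K, Ht.
  - intros HO.
    exists (fun y => exists (s : {x : X | P x}) e, V s /\ e > 0 /\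
              (forall t : {x : X | P x}, ball (proj1_sig s) (proj1_sig t) e -> V t) /\
              ball (proj1_sig s) y e).
    split.
    + intros y [s [e [Vs [He [K Hy]]]]]. destruct (ball_nbhd _ _ _ _ Hy) as [d [Hd Kd]].
      exists d; split; auto. intros z Hz. exists s, e; repeat split; auto.
    + intros s; split.
      * intros Vs. destruct (HO s Vs) as [e [He K]]. exists s, e; repeat split; auto.
        apply ball_center; auto.
      * intros [s' [e [Vs' [He [K Hy]]]]]. apply K; auto.
Qed.

Lemma prod_open_ball (X Y : BallSpace) :
  prod_open (ball_open X) (ball_open Y) = ball_open (ProdBS X Y).
Proof.
  apply functional_extensionality; intros W; apply propositional_extensionality; split.
  - intros HW p Hp. destruct (HW p Hp) as [U [V [HU [HV [Up [Vp K]]]]]].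
    destruct (HU _ Up) as [e1 [He1 K1]], (HV _ Vp) as [e2 [He2 K2]].
    exists (Rmin e1 e2); split; [apply Rmin_glb_lt; auto|].
    intros [a b] [H1 H2]. apply K; [apply K1 | apply K2]; eapply ball_mono; eauto;
      [apply Rmin_l | apply Rmin_r].
  - intros HO p Hp. destruct (HO p Hp) as [e [He K]].
    exists (fun a => ball (fst p) a e), (fun b => ball (snd p) b e).
    repeat split; try apply ball_is_open; try apply ball_center; auto.
    intros a b Ha Hb. apply (K (a, b)). split; auto.
Qed.

Definition cont (X Y : BallSpace) (f : X -> Y) (x : X) : Prop :=
  forall e, e > 0 -> exists d, d > 0 /\ forall y, ball x y d -> ball (f x) (f y) e.

Lemma continuous_of_cont (X Y : BallSpace) (f : X -> Y) :
  (forall x, cont X Y f x) -> continuous (ball_open X) (ball_open Y) f.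
Proof.
  intros Hc V HV x Hx. destruct (HV _ Hx) as [e [He K]]. destruct (Hc x e He) as [d [Hd Kd]].
  exists d; split; auto.
Qed.

Lemma cont_ext (X Y : BallSpace) (f g : X -> Y) x :
  (forall y, f y = g y) -> cont X Y f x -> cont X Y g x.
Proof.
  intros E H e He. destruct (H e He) as [d [Hd K]]. exists d; split; auto.
  intros y Hy; rewrite <- !E; auto.
Qed.

Lemma cont_id (X : BallSpace) x : cont X X (fun y => y) x.
Proof. intros e He; exists e; split; auto. Qed.

Lemma cont_const (X Y : BallSpace) (k : Y) x : cont X Y (fun _ => k) x.
Proof. intros e He; exists 1; split; [lra|]. intros; apply ball_center; auto. Qed.

Lemma cont_comp (X Y Z : BallSpace) (f : X -> Y) (g : Y -> Z) x :
  cont X Y f x -> cont Y Z g (f x) -> cont X Z (fun y => g (f y)) x.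
Proof.
  intros Hf Hg e He. destruct (Hg e He) as [d1 [Hd1 K1]]. destruct (Hf d1 Hd1) as [d2 [Hd2 K2]].
  exists d2; split; auto.
Qed.

Lemma cont_pair (X Y Z : BallSpace) (f : X -> Y) (g : X -> Z) x :
  cont X Y f x -> cont X Z g x -> cont X (ProdBS Y Z) (fun y => (f y, g y)) x.
Proof.
  intros Hf Hg e He. destruct (Hf e He) as [d1 [Hd1 K1]], (Hg e He) as [d2 [Hd2 K2]].
  exists (Rmin d1 d2); split; [apply Rmin_glb_lt; auto|].
  intros y Hy; split; [apply K1 | apply K2]; eapply ball_mono; eauto; [apply Rmin_l | apply Rmin_r].
Qed.

Lemma cont_fst (X Y : BallSpace) p : cont (ProdBS X Y) X fst p.
Proof. intros e He; exists e; split; auto. intros y [H _]; auto. Qed.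

Lemma cont_snd (X Y : BallSpace) p : cont (ProdBS X Y) Y snd p.
Proof. intros e He; exists e; split; auto. intros y [_ H]; auto. Qed.

Lemma cont_proj1 (X : BallSpace) (P : X -> Prop) s : cont (SubBS X P) X (@proj1_sig _ _) s.
Proof. intros e He; exists e; split; auto. Qed.

Lemma cont_into_sub (X Y : BallSpace) (P : Y -> Prop) (f : X -> {y : Y | P y}) x :
  cont X Y (fun z => proj1_sig (f z)) x -> cont X (SubBS Y P) f x.
Proof. intros H e He. destruct (H e He) as [d [Hd K]]. exists d; split; auto. Qed.

Definition RBS : BallSpace := MetricBS R Rdist Rdist_eq (fun x y z => Rdist_tri x z y).

Lemma norm3_add p q : norm3 (add3 p q) <= norm3 p + norm3 q.
Proof.
  pose proof (sqrt_pos (dot3 p p)); pose proof (sqrt_pos (dot3 q q)).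
  unfold norm3 at 1. rewrite <- (sqrt_square (norm3 p + norm3 q)) by (unfold norm3; lra).
  apply sqrt_le_1_alt.
  replace (dot3 (add3 p q) (add3 p q)) with (dot3 p p + dot3 q q + 2 * dot3 p q)
    by (destruct3 p; destruct3 q; simpl; ring).
  rewrite <- !norm3_sq. pose proof (dot3_le_norm p q). nra.
Qed.

Lemma dist3_refl u : dist3 u u = 0.
Proof.
  unfold dist3, norm3. replace (dot3 (sub3 u u) (sub3 u u)) with 0
    by (destruct3 u; simpl; ring). apply sqrt_0.
Qed.

Lemma dist3_tri u v w : dist3 u w <= dist3 u v + dist3 v w.
Proof.
  unfold dist3. replace (sub3 u w) with (add3 (sub3 u v) (sub3 v w))
    by (destruct3 u; destruct3 v; destruct3 w; simpl; split_triples; ring).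
  apply norm3_add.
Qed.

Definition R3BS : BallSpace := MetricBS R3 dist3 dist3_refl dist3_tri.

Definition row_dists (A B : Mat3) : R3 := match A, B with (a1, a2, a3), (b1, b2, b3) =>
  (dist3 a1 b1, dist3 a2 b2, dist3 a3 b3) end.

Lemma mdist_row_dists A B : mdist A B = norm3 (row_dists A B).
Proof.
  destruct A as [[a1 a2] a3]; destruct B as [[b1 b2] b3]. cbn [mdist row_dists].
  unfold norm3 at 1. cbn [dot3]. unfold dist3. rewrite !norm3_sq; reflexivity.
Qed.

Lemma mdist_refl A : mdist A A = 0.
Proof.
  rewrite mdist_row_dists. destruct A as [[a1 a2] a3]; simpl; rewrite !dist3_refl.
  unfold norm3; simpl. replace (0 * 0 + 0 * 0 + 0 * 0) with 0 by ring. apply sqrt_0.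
Qed.

Lemma mdist_tri A B C : mdist A C <= mdist A B + mdist B C.
Proof.
  rewrite !mdist_row_dists. eapply Rle_trans; [|apply norm3_add]. unfold norm3.
  apply sqrt_le_1_alt.
  destruct A as [[a1 a2] a3]; destruct B as [[b1 b2] b3]; destruct C as [[c1 c2] c3]; simpl.
  pose proof (dist3_tri a1 b1 c1); pose proof (dist3_tri a2 b2 c2); pose proof (dist3_tri a3 b3 c3).
  unfold dist3 in *.
  pose proof (sqrt_pos (dot3 (sub3 a1 c1) (sub3 a1 c1))); pose proof (sqrt_pos (dot3 (sub3 a2 c2) (sub3 a2 c2)));
  pose proof (sqrt_pos (dot3 (sub3 a3 c3) (sub3 a3 c3))).
  unfold norm3 in *. nra.
Qed.

Definition MatBS : BallSpace := MetricBS Mat3 mdist mdist_refl mdist_tri.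

Lemma continuity_pt_ident t : continuity_pt (fun s => s) t.
Proof. exact (derivable_continuous_pt id t (derivable_pt_id t)). Qed.

Section RealContinuity.
Variables (X : BallSpace) (x : X).

Lemma cont_R_map (f : X -> R) (h : R -> R) :
  cont X RBS f x -> continuity_pt h (f x) -> cont X RBS (fun y => h (f y)) x.
Proof.
  intros Hf Hh e He. destruct (Hh e He) as [a [Ha K]].
  destruct (Hf a Ha) as [d [Hd Kd]]. exists d; split; auto. intros y Hy.
  simpl. rewrite Rdist_sym.
  destruct (Req_dec (f x) (f y)) as [Exy|Exy].
  - rewrite Exy, Rdist_eq; auto.
  - apply (K (f y)). split; [split; [constructor | auto] |].
    rewrite Rdist_sym. apply Kd, Hy.
Qed.

Lemma cont_R_plus (f g : X -> R) :
  cont X RBS f x -> cont X RBS g x -> cont X RBS (fun y => f y + g y) x.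
Proof.
  intros Hf Hg e He. destruct (Hf (e / 2)) as [d1 [Hd1 K1]]; [lra|].
  destruct (Hg (e / 2)) as [d2 [Hd2 K2]]; [lra|].
  exists (Rmin d1 d2); split; [apply Rmin_glb_lt; auto|]. intros y Hy.
  specialize (K1 y (ball_mono _ _ _ _ _ Hy (Rmin_l _ _))).
  specialize (K2 y (ball_mono _ _ _ _ _ Hy (Rmin_r _ _))).
  simpl in *. pose proof (Rdist_plus (f x) (f y) (g x) (g y)). lra.
Qed.

Lemma cont_R_scal (k : R) (f : X -> R) : cont X RBS f x -> cont X RBS (fun y => k * f y) x.
Proof.
  intros Hf. apply (cont_R_map f (fun t => k * t)); auto.
  apply continuity_pt_scal, continuity_pt_ident.
Qed.

Lemma cont_R_minus (f g : X -> R) :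
  cont X RBS f x -> cont X RBS g x -> cont X RBS (fun y => f y - g y) x.
Proof.
  intros Hf Hg. apply (cont_ext X RBS (fun y => f y + -1 * g y)); [intros; simpl; ring|].
  apply cont_R_plus, cont_R_scal; auto.
Qed.

(* Products, by polarization: f g = ((f + g)^2 - (f - g)^2) / 4. *)
Lemma cont_R_mult (f g : X -> R) :
  cont X RBS f x -> cont X RBS g x -> cont X RBS (fun y => f y * g y) x.
Proof.
  intros Hf Hg.
  assert (Hsq : forall h : X -> R, cont X RBS h x -> cont X RBS (fun y => h y * h y) x).
  { intros h Hh. apply (cont_R_map h (fun t => t * t)); auto.
    apply continuity_pt_mult; apply continuity_pt_ident. }
  apply (cont_ext X RBS (fun y => / 4 * ((f y + g y) * (f y + g y) - (f y - g y) * (f y - g y))));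
    [intros; simpl; field|].
  apply cont_R_scal, cont_R_minus; apply Hsq; [apply cont_R_plus | apply cont_R_minus]; auto.
Qed.

End RealContinuity.

Definition coord1 (u : R3) : R := fst (fst u).
Definition coord2 (u : R3) : R := snd (fst u).
Definition coord3 (u : R3) : R := snd u.

Lemma euclid_bounds p q r :
  let s := sqrt (p * p + q * q + r * r) in
  Rabs p <= s /\ Rabs q <= s /\ Rabs r <= s /\ s <= Rabs p + Rabs q + Rabs r.
Proof.
  intros s. assert (Habs : forall t, t * t = Rabs t * Rabs t)
    by (intros t; unfold Rabs; destruct (Rcase_abs t); ring).
  pose proof (Rabs_pos p); pose proof (Rabs_pos q); pose proof (Rabs_pos r).
  unfold s; rewrite (Habs p), (Habs q), (Habs r).
  repeat split.
  - rewrite <- (sqrt_square (Rabs p)) at 1 by auto. apply sqrt_le_1_alt; nra.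
  - rewrite <- (sqrt_square (Rabs q)) at 1 by auto. apply sqrt_le_1_alt; nra.
  - rewrite <- (sqrt_square (Rabs r)) at 1 by auto. apply sqrt_le_1_alt; nra.
  - rewrite <- (sqrt_square (Rabs p + Rabs q + Rabs r)) by lra. apply sqrt_le_1_alt; nra.
Qed.

Lemma dist3_coords u v : dist3 u v = sqrt
  ((coord1 u - coord1 v) * (coord1 u - coord1 v) + (coord2 u - coord2 v) * (coord2 u - coord2 v)
   + (coord3 u - coord3 v) * (coord3 u - coord3 v)).
Proof. destruct3 u; destruct3 v; unfold dist3, norm3, coord1, coord2, coord3; simpl; f_equal; ring. Qed.

Section VectorContinuity.
Variables (X : BallSpace) (x : X).

Lemma cont_coords (f : X -> R3) : cont X R3BS f x ->
  cont X RBS (fun y => coord1 (f y)) x /\ cont X RBS (fun y => coord2 (f y)) x /\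
  cont X RBS (fun y => coord3 (f y)) x.
Proof.
  intros Hf; repeat split; intros e He; destruct (Hf e He) as [d [Hd K]];
    exists d; split; auto; intros y Hy; specialize (K y Hy); simpl in *;
    rewrite dist3_coords in K; destruct (euclid_bounds (coord1 (f x) - coord1 (f y))
      (coord2 (f x) - coord2 (f y)) (coord3 (f x) - coord3 (f y))) as [B1 [B2 [B3 _]]];
    unfold Rdist; lra.
Qed.

Lemma cont_vec (a b c : X -> R) : cont X RBS a x -> cont X RBS b x -> cont X RBS c x ->
  cont X R3BS (fun y => (a y, b y, c y)) x.
Proof.
  intros Ha Hb Hc e He.
  destruct (Ha (e / 3)) as [d1 [Hd1 K1]]; [lra|].
  destruct (Hb (e / 3)) as [d2 [Hd2 K2]]; [lra|].
  destruct (Hc (e / 3)) as [d3 [Hd3 K3]]; [lra|].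
  exists (Rmin d1 (Rmin d2 d3)); split; [repeat apply Rmin_glb_lt; auto|]. intros y Hy.
  specialize (K1 y (ball_mono _ _ _ _ _ Hy (Rmin_l _ _))).
  specialize (K2 y (ball_mono _ _ _ _ _ Hy (Rle_trans _ _ _ (Rmin_r _ _) (Rmin_l _ _)))).
  specialize (K3 y (ball_mono _ _ _ _ _ Hy (Rle_trans _ _ _ (Rmin_r _ _) (Rmin_r _ _)))).
  simpl in *. rewrite dist3_coords; unfold coord1, coord2, coord3; simpl.
  destruct (euclid_bounds (a x - a y) (b x - b y) (c x - c y)) as [_ [_ [_ B]]].
  unfold Rdist in *. lra.
Qed.

Ltac by_coords f g :=
  let H1 := fresh in let H2 := fresh in let H3 := fresh in
  let G1 := fresh in let G2 := fresh in let G3 := fresh in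
  intros Hf Hg; destruct (cont_coords f Hf) as [H1 [H2 H3]];
  destruct (cont_coords g Hg) as [G1 [G2 G3]].

Lemma cont_add3 (f g : X -> R3) :
  cont X R3BS f x -> cont X R3BS g x -> cont X R3BS (fun y => add3 (f y) (g y)) x.
Proof.
  by_coords f g.
  apply (cont_ext X R3BS (fun y => (coord1 (f y) + coord1 (g y), coord2 (f y) + coord2 (g y),
                                    coord3 (f y) + coord3 (g y)))).
  { intros y; unfold coord1, coord2, coord3; destruct3 (f y); destruct3 (g y); reflexivity. }
  apply cont_vec; apply cont_R_plus; auto.
Qed.

Lemma cont_scal3 (k : X -> R) (f : X -> R3) :
  cont X RBS k x -> cont X R3BS f x -> cont X R3BS (fun y => scal3 (k y) (f y)) x.
Proof.
  intros Hk Hf. destruct (cont_coords f Hf) as [H1 [H2 H3]].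
  apply (cont_ext X R3BS (fun y => (k y * coord1 (f y), k y * coord2 (f y), k y * coord3 (f y)))).
  { intros y; unfold coord1, coord2, coord3; destruct3 (f y); reflexivity. }
  apply cont_vec; apply cont_R_mult; auto.
Qed.

Lemma cont_sub3 (f g : X -> R3) :
  cont X R3BS f x -> cont X R3BS g x -> cont X R3BS (fun y => sub3 (f y) (g y)) x.
Proof.
  intros Hf Hg. apply cont_add3, cont_scal3; auto. apply cont_const.
Qed.

Lemma cont_cross3 (f g : X -> R3) :
  cont X R3BS f x -> cont X R3BS g x -> cont X R3BS (fun y => cross3 (f y) (g y)) x.
Proof.
  by_coords f g.
  apply (cont_ext X R3BS (fun y =>
    (coord2 (f y) * coord3 (g y) - coord3 (f y) * coord2 (g y),
     coord3 (f y) * coord1 (g y) - coord1 (f y) * coord3 (g y),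
     coord1 (f y) * coord2 (g y) - coord2 (f y) * coord1 (g y)))).
  { intros y; unfold coord1, coord2, coord3; destruct3 (f y); destruct3 (g y); reflexivity. }
  apply cont_vec; apply cont_R_minus; apply cont_R_mult; auto.
Qed.

Lemma cont_dot3 (f g : X -> R3) :
  cont X R3BS f x -> cont X R3BS g x -> cont X RBS (fun y => dot3 (f y) (g y)) x.
Proof.
  by_coords f g.
  apply (cont_ext X RBS (fun y =>
    coord1 (f y) * coord1 (g y) + coord2 (f y) * coord2 (g y) + coord3 (f y) * coord3 (g y))).
  { intros y; unfold coord1, coord2, coord3; destruct3 (f y); destruct3 (g y); reflexivity. }
  repeat apply cont_R_plus; apply cont_R_mult; auto.
Qed.

Lemma cont_normalize (f : X -> R3) :
  cont X R3BS f x -> norm3 (f x) <> 0 -> cont X R3BS (fun y => normalize (f y)) x.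
Proof.
  intros Hf Hn. apply cont_scal3; auto.
  assert (Hnorm : cont X RBS (fun y => norm3 (f y)) x).
  { apply (cont_R_map X x (fun y => dot3 (f y) (f y)) sqrt); [apply cont_dot3; auto|].
    apply continuity_pt_sqrt, dot3_ge0. }
  apply (cont_R_map X x (fun y => norm3 (f y)) Rinv); auto.
  apply continuity_pt_inv; [apply continuity_pt_ident | exact Hn].
Qed.

End VectorContinuity.

Definition row1 (A : Mat3) : R3 := fst (fst A).
Definition row2 (A : Mat3) : R3 := snd (fst A).
Definition row3 (A : Mat3) : R3 := snd A.

Lemma mdist_rows A B : mdist A B = sqrt
  (dist3 (row1 A) (row1 B) * dist3 (row1 A) (row1 B) + dist3 (row2 A) (row2 B) * dist3 (row2 A) (row2 B)
   + dist3 (row3 A) (row3 B) * dist3 (row3 A) (row3 B)).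
Proof. rewrite mdist_row_dists. destruct A as [[a1 a2] a3]; destruct B as [[b1 b2] b3]; reflexivity. Qed.

Section MatrixContinuity.
Variables (X : BallSpace) (x : X).

Lemma cont_rows (M : X -> Mat3) : cont X MatBS M x ->
  cont X R3BS (fun y => row1 (M y)) x /\ cont X R3BS (fun y => row2 (M y)) x /\
  cont X R3BS (fun y => row3 (M y)) x.
Proof.
  intros HM; repeat split; intros e He; destruct (HM e He) as [d [Hd K]];
    exists d; split; auto; intros y Hy; specialize (K y Hy); cbn [ball MatBS R3BS MetricBS] in *;
    rewrite mdist_rows in K;
    destruct (euclid_bounds (dist3 (row1 (M x)) (row1 (M y))) (dist3 (row2 (M x)) (row2 (M y)))
      (dist3 (row3 (M x)) (row3 (M y)))) as [B1 [B2 [B3 _]]];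
    rewrite !Rabs_pos_eq in * by apply sqrt_pos; lra.
Qed.

Lemma cont_mat (r1 r2 r3 : X -> R3) :
  cont X R3BS r1 x -> cont X R3BS r2 x -> cont X R3BS r3 x ->
  cont X MatBS (fun y => (r1 y, r2 y, r3 y)) x.
Proof.
  intros H1 H2 H3 e He.
  destruct (H1 (e / 3)) as [d1 [Hd1 K1]]; [lra|].
  destruct (H2 (e / 3)) as [d2 [Hd2 K2]]; [lra|].
  destruct (H3 (e / 3)) as [d3 [Hd3 K3]]; [lra|].
  exists (Rmin d1 (Rmin d2 d3)); split; [repeat apply Rmin_glb_lt; auto|]. intros y Hy.
  specialize (K1 y (ball_mono _ _ _ _ _ Hy (Rmin_l _ _))).
  specialize (K2 y (ball_mono _ _ _ _ _ Hy (Rle_trans _ _ _ (Rmin_r _ _) (Rmin_l _ _)))).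
  specialize (K3 y (ball_mono _ _ _ _ _ Hy (Rle_trans _ _ _ (Rmin_r _ _) (Rmin_r _ _)))).
  cbn [ball MatBS R3BS MetricBS] in *. rewrite mdist_rows; unfold row1, row2, row3; simpl.
  destruct (euclid_bounds (dist3 (r1 x) (r1 y)) (dist3 (r2 x) (r2 y)) (dist3 (r3 x) (r3 y)))
    as [_ [_ [_ B]]].
  rewrite !Rabs_pos_eq in B by apply sqrt_pos. lra.
Qed.

Lemma cont_transp (M : X -> Mat3) : cont X MatBS M x -> cont X MatBS (fun y => transp (M y)) x.
Proof.
  intros HM. destruct (cont_rows M HM) as [R1 [R2 R3]].
  destruct (cont_coords X x _ R1) as [A1 [A2 A3]], (cont_coords X x _ R2) as [B1 [B2 B3]],
    (cont_coords X x _ R3) as [C1 [C2 C3]].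
  apply (cont_ext X MatBS (fun y =>
    ((coord1 (row1 (M y)), coord1 (row2 (M y)), coord1 (row3 (M y))),
     (coord2 (row1 (M y)), coord2 (row2 (M y)), coord2 (row3 (M y))),
     (coord3 (row1 (M y)), coord3 (row2 (M y)), coord3 (row3 (M y)))))).
  { intros y; destruct_mat (M y); reflexivity. }
  apply cont_mat; apply cont_vec; auto.
Qed.

Lemma cont_mat_vec (M : X -> Mat3) (f : X -> R3) :
  cont X MatBS M x -> cont X R3BS f x -> cont X R3BS (fun y => mat_vec (M y) (f y)) x.
Proof.
  intros HM Hf. destruct (cont_rows M HM) as [R1 [R2 R3]].
  apply (cont_ext X R3BS (fun y =>
    (dot3 (row1 (M y)) (f y), dot3 (row2 (M y)) (f y), dot3 (row3 (M y)) (f y)))).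
  { intros y; unfold row1, row2, row3; destruct (M y) as [[? ?] ?]; reflexivity. }
  apply cont_vec; apply cont_dot3; auto.
Qed.

Lemma cont_mat_mul (M N : X -> Mat3) :
  cont X MatBS M x -> cont X MatBS N x -> cont X MatBS (fun y => mat_mul (M y) (N y)) x.
Proof.
  intros HM HN. destruct (cont_rows M HM) as [R1 [R2 R3]].
  pose proof (cont_transp N HN) as HT.
  apply (cont_ext X MatBS (fun y => (mat_vec (transp (N y)) (row1 (M y)),
    mat_vec (transp (N y)) (row2 (M y)), mat_vec (transp (N y)) (row3 (M y))))).
  { intros y; rewrite mat_mul_rows; destruct (M y) as [[? ?] ?]; reflexivity. }
  apply cont_mat; apply cont_mat_vec; auto.
Qed.

Lemma cont_frame (a b : X -> R3) : cont X R3BS a x -> cont X R3BS b x ->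
  norm3 (a x) <> 0 -> norm3 (cross3 (a x) (b x)) <> 0 ->
  cont X MatBS (fun y => frame (a y) (b y)) x.
Proof.
  intros Ha Hb Na Nc. apply (cont_transp (fun y => frame_rows (a y) (b y))).
  assert (E1 : cont X R3BS (fun y => normalize (a y)) x) by (apply cont_normalize; auto).
  assert (E3 : cont X R3BS (fun y => normalize (cross3 (a y) (b y))) x)
    by (apply (cont_normalize X x (fun y => cross3 (a y) (b y))); auto; apply cont_cross3; auto).
  apply cont_mat; auto. apply (cont_cross3 X x (fun y => normalize (cross3 (a y) (b y)))); auto.
Qed.

End MatrixContinuity.

Lemma finite_radius n (P : Idx n -> R -> Prop) :
  (forall i d d', P i d -> 0 < d' <= d -> P i d') ->
  (forall i, exists d, d > 0 /\ P i d) -> exists d, d > 0 /\ forall i, P i d.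
Proof.
  intros Hm Hex.
  assert (K : forall m, (m <= n)%nat ->
            exists d, d > 0 /\ forall i : Idx n, (proj1_sig i < m)%nat -> P i d).
  { induction m; intros Hmn.
    - exists 1; split; [lra|]. intros i Hi; lia.
    - destruct IHm as [d0 [Hd0 K0]]; [lia|].
      assert (Hlt : (m < n)%nat) by lia.
      destruct (Hex (exist _ m Hlt)) as [d1 [Hd1 K1]].
      exists (Rmin d0 d1); split; [apply Rmin_glb_lt; auto|].
      intros [k Hk] Hkm. simpl in Hkm.
      destruct (Nat.eq_dec k m) as [->|Hne].
      + rewrite (proof_irrelevance _ Hk Hlt). apply (Hm _ d1); auto.
        split; [apply Rmin_glb_lt; auto | apply Rmin_r].
      + apply (Hm _ d0); [apply K0; simpl; lia|].
        split; [apply Rmin_glb_lt; auto | apply Rmin_l]. }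
  destruct (K n (le_n n)) as [d [Hd Kd]]. exists d; split; auto.
  intros i; apply Kd; destruct i; simpl; auto.
Qed.

Program Definition ConfBS (n : nat) : BallSpace :=
  {| pts := Conf n; ball := fun x y e => forall i, dist3 (x i) (y i) < e |}.
Next Obligation. rewrite dist3_refl; lra. Qed.
Next Obligation. specialize (H i); lra. Qed.
Next Obligation.
  destruct (finite_radius n (fun i d => d <= e - dist3 (x i) (y i))) as [d [Hd K]].
  - intros; lra.
  - intros i; exists (e - dist3 (x i) (y i)); split; [specialize (H i); lra | lra].
  - exists d; split; auto. intros z Hz i. pose proof (dist3_tri (x i) (y i) (z i)).
    specialize (K i); specialize (Hz i). lra.
Qed.

Lemma cont_conf (X : BallSpace) n (f : X -> Conf n) x :
  (forall i, cont X R3BS (fun y => f y i) x) -> cont X (ConfBS n) f x.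
Proof.
  intros H e He.
  destruct (finite_radius n (fun i d => forall y, ball x y d -> dist3 (f x i) (f y i) < e))
    as [d [Hd K]].
  - intros i d d' Hp Hd' y Hy. apply Hp. eapply ball_mono; eauto; lra.
  - intros i. destruct (H i e He) as [d [Hd K]]. exists d; split; auto.
  - exists d; split; auto. intros y Hy i. apply K; auto.
Qed.

Lemma cont_eval n (x : Conf n) i : cont (ConfBS n) R3BS (fun y => y i) x.
Proof. intros e He; exists e; split; auto; intros y Hy; apply Hy. Qed.

Definition SO3BS : BallSpace := SubBS MatBS is_SO3.

Lemma SO3_open_ball : SO3_open = ball_open SO3BS.
Proof. exact (sub_open_ball MatBS is_SO3). Qed.

Lemma prod_open_SO3_r (X : BallSpace) :
  prod_open (ball_open X) SO3_open = ball_open (ProdBS X SO3BS).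
Proof. rewrite SO3_open_ball; exact (prod_open_ball X SO3BS). Qed.

Lemma prod_open_SO3_l (X : BallSpace) :
  prod_open SO3_open (ball_open X) = ball_open (ProdBS SO3BS X).
Proof. rewrite SO3_open_ball; exact (prod_open_ball SO3BS X). Qed.

Section GroupContinuity.
Variables (X : BallSpace) (x : X).

Lemma cont_rot_val (f : X -> SO3) : cont X SO3BS f x -> cont X MatBS (fun y => proj1_sig (f y)) x.
Proof. intros Hf. apply (cont_comp X SO3BS MatBS f); auto. apply cont_proj1. Qed.

Lemma cont_rot_mul (f g : X -> SO3) :
  cont X SO3BS f x -> cont X SO3BS g x -> cont X SO3BS (fun y => rot_mul (f y) (g y)) x.
Proof. intros Hf Hg. apply cont_into_sub, cont_mat_mul; apply cont_rot_val; auto. Qed.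

Lemma cont_rot_inv (f : X -> SO3) : cont X SO3BS f x -> cont X SO3BS (fun y => rot_inv (f y)) x.
Proof. intros Hf. apply cont_into_sub, cont_transp, cont_rot_val, Hf. Qed.

End GroupContinuity.

Lemma continuous_comp {X Y Z : Type} (OX : Opens X) (OY : Opens Y) (OZ : Opens Z)
  (f : X -> Y) (g : Y -> Z) :
  continuous OX OY f -> continuous OY OZ g -> continuous OX OZ (fun x => g (f x)).
Proof. intros Hf Hg V HV. exact (Hf _ (Hg V HV)). Qed.

Lemma continuous_proj1 {X : Type} (OX : Opens X) (P : X -> Prop) :
  continuous (sub_open OX P) OX (@proj1_sig X P).
Proof. intros V HV. exists V; split; [exact HV | tauto]. Qed.

Lemma continuous_into_full {X : Type} (OX : Opens X) :
  continuous OX (sub_open OX (fun _ => True)) (fun x => exist (fun _ => True) x I).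
Proof.
  intros V [U [HU HVU]].
  replace (fun x => V (exist (fun _ => True) x I)) with U; [exact HU|].
  apply functional_extensionality; intros x; apply propositional_extensionality.
  rewrite (HVU (exist _ x I)); reflexivity.
Qed.

Lemma continuous_prod_map {X X' Y Y' : Type} (OX : Opens X) (OX' : Opens X') (OY : Opens Y)
  (OY' : Opens Y') (f : X -> X') (g : Y -> Y') :
  continuous OX OX' f -> continuous OY OY' g ->
  continuous (prod_open OX OY) (prod_open OX' OY') (fun p => (f (fst p), g (snd p))).
Proof.
  intros Hf Hg W HW p Hp. destruct (HW _ Hp) as [U [V [HU [HV [Up [Vp Box]]]]]].
  exists (fun a => U (f a)), (fun b => V (g b)).
  repeat split; auto.
Qed.

Lemma embedding_of_cont (X Y : BallSpace) (f : X -> Y) (g : {y : Y | image_of f y} -> X) :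
  (forall x, g (corestr f x) = x) -> (forall x, cont X Y f x) ->
  (forall y, cont (SubBS Y (image_of f)) X g y) ->
  homeo_onto_image (ball_open X) (ball_open Y) f.
Proof.
  intros gf Hf Hg. unfold homeo_onto_image. rewrite sub_open_ball.
  exists g. split; [exact gf | split; [|split]].
  - intros [y [x Hx]]. subst y.
    change (exist _ (f x) (ex_intro _ x eq_refl)) with (corestr f x). rewrite gf; reflexivity.
  - apply (continuous_of_cont X (SubBS Y (image_of f))); intros x. apply cont_into_sub, Hf.
  - apply (continuous_of_cont (SubBS Y (image_of f)) X), Hg.
Qed.

Lemma locally_trivial_of_trivial {P B : Type} (OP : Opens P) (OB : Opens B)
  (act : SO3 -> P -> P) (q : P -> B) :
  OB (fun _ => True) -> trivial_SO3_bundle OP OB act q ->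
  forall b : B, exists U : B -> Prop, OB U /\ U b /\
    exists psi : {x : P | U (q x)} -> ({b' : B | U b'} * SO3),
      homeomorphism (sub_open OP (fun x => U (q x))) (prod_open (sub_open OB U) SO3_open) psi /\
      (forall x, proj1_sig (fst (psi x)) = q (proj1_sig x)) /\
      (forall (g : SO3) x x', proj1_sig x' = act g (proj1_sig x) ->
         proj1_sig (snd (psi x')) = mat_mul (proj1_sig g) (proj1_sig (snd (psi x)))).
Proof.
  intros Hfull [Psi [[G [GPsi [PsiG [cPsi cG]]]] [Hq Hequiv]]] b.
  exists (fun _ => True); split; [exact Hfull | split; [exact I|]].
  exists (fun s => (exist (fun _ => True) (fst (Psi (proj1_sig s))) I, snd (Psi (proj1_sig s)))).
  split; [|split].
  - exists (fun p => exist (fun _ => True) (G (proj1_sig (fst p), snd p)) I).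
    split; [|split; [|split]].
    + intros [x []]. cbn. rewrite <- surjective_pairing, GPsi. reflexivity.
    + intros [[b' []] g]. cbn. rewrite PsiG. reflexivity.
    + apply (continuous_comp _ OP _ (@proj1_sig P _)
               (fun x => (exist (fun _ => True) (fst (Psi x)) I, snd (Psi x))));
        [apply continuous_proj1|].
      apply (continuous_comp _ (prod_open OB SO3_open) _ Psi
               (fun p => (exist (fun _ => True) (fst p) I, snd p))); [exact cPsi|].
      apply (continuous_prod_map _ _ _ _ (fun b' => exist (fun _ => True) b' I) (fun g => g));
        [apply continuous_into_full | intros V HV; exact HV].
    + apply (continuous_comp _ (prod_open OB SO3_open) _ (fun p => (proj1_sig (fst p), snd p))
               (fun p => exist (fun _ => True) (G p) I)).
      * apply (continuous_prod_map _ _ _ _ (@proj1_sig B _) (fun g => g));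
          [apply continuous_proj1 | intros V HV; exact HV].
      * apply (continuous_comp _ OP _ G (fun x => exist (fun _ => True) x I));
          [exact cG | apply continuous_into_full].
  - intros x; apply Hq.
  - intros g x x' Ex. cbn. rewrite Ex. apply Hequiv.
Qed.

(** An SO(3)-space with a continuous equivariant frame is a trivial bundle *)

Section EquivariantFrame.
Variables (P : BallSpace) (B : Type) (q : P -> B) (act : SO3 -> P -> P) (F : P -> SO3).
Hypothesis act_cont : forall p, cont (ProdBS SO3BS P) P (fun p => act (fst p) (snd p)) p.
Hypothesis act_one : forall x, act rot_one x = x.
Hypothesis act_mul : forall g h x, act g (act h x) = act (rot_mul g h) x.
Hypothesis q_onto : forall b, exists x, q x = b.
Hypothesis q_fibres : forall x y, q x = q y <-> exists g, y = act g x.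
Hypothesis F_cont : forall x, cont P SO3BS F x.
Hypothesis F_equiv : forall g x, F (act g x) = rot_mul g (F x).

Lemma q_act g x : q (act g x) = q x.
Proof. symmetry; apply q_fibres; exists g; reflexivity. Qed.

(* The normal form of x: the point of its orbit whose frame is the identity. *)
Definition normal_form (x : P) : P := act (rot_inv (F x)) x.

Lemma frame_normal_form x : F (normal_form x) = rot_one.
Proof. unfold normal_form; rewrite F_equiv; apply rot_mul_inv_l. Qed.

Lemma normal_form_invariant g x : normal_form (act g x) = normal_form x.
Proof.
  unfold normal_form. rewrite F_equiv, act_mul, rot_inv_mul, rot_mul_assoc, rot_mul_inv_l,
    rot_mul_one_r; reflexivity.
Qed.

Lemma cont_normal_form x : cont P P normal_form x.
Proof.
  apply (cont_comp P (ProdBS SO3BS P) P (fun y => (rot_inv (F y), y))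
           (fun p => act (fst p) (snd p))); [|apply act_cont].
  apply cont_pair; [apply cont_rot_inv, F_cont | apply cont_id].
Qed.

(* A continuous section of q: the normal form of any point of the orbit. *)
Definition orbit_section (b : B) : P :=
  normal_form (proj1_sig (constructive_indefinite_description _ (q_onto b))).

Lemma orbit_section_q x : orbit_section (q x) = normal_form x.
Proof.
  unfold orbit_section. destruct (constructive_indefinite_description _ _) as [r Hr]; cbn.
  destruct (proj1 (q_fibres r x) Hr) as [g ->]. symmetry; apply normal_form_invariant.
Qed.

Lemma q_orbit_section b : q (orbit_section b) = b.
Proof.
  unfold orbit_section. destruct (constructive_indefinite_description _ _) as [r Hr]; cbn.
  unfold normal_form; rewrite q_act; exact Hr.
Qed.

Definition trivialization (x : P) : B * SO3 := (q x, F x).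
Definition untrivialization (p : B * SO3) : P := act (snd p) (orbit_section (fst p)).

Lemma untrivialization_trivialization x : untrivialization (trivialization x) = x.
Proof.
  unfold untrivialization, trivialization; cbn. rewrite orbit_section_q. unfold normal_form.
  rewrite act_mul, rot_mul_inv_r; apply act_one.
Qed.

Lemma trivialization_untrivialization p : trivialization (untrivialization p) = p.
Proof.
  destruct p as [b g]. unfold untrivialization, trivialization; cbn.
  rewrite q_act, q_orbit_section, F_equiv.
  unfold orbit_section; rewrite frame_normal_form, rot_mul_one_r; reflexivity.
Qed.

(* q is continuous by definition of the quotient topology, F by hypothesis. *)
Lemma continuous_trivialization :
  continuous (ball_open P) (prod_open (quot_open (ball_open P) q) SO3_open) trivialization.
Proof.
  rewrite SO3_open_ball. intros W HW x Hx.
  destruct (HW _ Hx) as [U [V [HU [HV [Ux [Vx Box]]]]]].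
  destruct (HU x Ux) as [e1 [He1 K1]], (HV _ Vx) as [e2 [He2 K2]].
  destruct (F_cont x e2 He2) as [d2 [Hd2 Kd2]].
  exists (Rmin e1 d2); split; [apply Rmin_glb_lt; auto|]. intros y Hy.
  apply Box; [apply K1 | apply K2, Kd2]; eapply ball_mono; eauto; [apply Rmin_l | apply Rmin_r].
Qed.

(* The section is continuous in the quotient topology: its pull-back to P is
   the normal form. *)
Lemma cont_orbit_section_q x : cont P P (fun y => orbit_section (q y)) x.
Proof.
  apply (cont_ext P P normal_form); [intros y; symmetry; apply orbit_section_q|].
  apply cont_normal_form.
Qed.

Lemma continuous_untrivialization :
  continuous (prod_open (quot_open (ball_open P) q) SO3_open) (ball_open P) untrivialization.
Proof.
  rewrite SO3_open_ball. intros V HV [b g] Hp. unfold untrivialization in Hp; cbn in Hp.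
  destruct (HV _ Hp) as [e [He K]].
  destruct (act_cont (g, orbit_section b) e He) as [d [Hd Kd]].
  exists (fun b' => ball (orbit_section b) (orbit_section b') d), (fun g' => @ball SO3BS g g' d).
  repeat split.
  - intros x Hx. destruct (ball_nbhd _ _ _ _ Hx) as [d1 [Hd1 K1]].
    destruct (cont_orbit_section_q x d1 Hd1) as [d2 [Hd2 K2]].
    exists d2; split; auto.
  - apply ball_is_open.
  - apply ball_center; auto.
  - apply ball_center; auto.
  - intros b' g' Hb Hg. apply K, (Kd (g', orbit_section b')). split; auto.
Qed.

Theorem equivariant_frame_trivial :
  trivial_SO3_bundle (ball_open P) (quot_open (ball_open P) q) act q.
Proof.
  exists trivialization. split; [|split].
  - exists untrivialization. split; [|split; [|split]].
    + apply untrivialization_trivialization.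
    + apply trivialization_untrivialization.
    + apply continuous_trivialization.
    + apply continuous_untrivialization.
  - reflexivity.
  - intros g x. unfold trivialization; cbn. rewrite F_equiv; reflexivity.
Qed.

(* (x, g) |-> (x, g.x) is an embedding: g is recovered as F(g.x) F(x)^-1. *)
Definition orbit_pair (p : P * SO3) : P * P := (fst p, act (snd p) (fst p)).
Definition transporter (y : {y : P * P | image_of orbit_pair y}) : P * SO3 :=
  (fst (proj1_sig y), rot_mul (F (snd (proj1_sig y))) (rot_inv (F (fst (proj1_sig y))))).

Lemma transporter_orbit_pair p : transporter (corestr orbit_pair p) = p.
Proof.
  destruct p as [x g]. unfold transporter, orbit_pair; cbn.
  rewrite F_equiv, rot_mul_assoc, rot_mul_inv_r, rot_mul_one_r; reflexivity.
Qed.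

Lemma orbit_pair_embedding :
  homeo_onto_image (prod_open (ball_open P) SO3_open) (prod_open (ball_open P) (ball_open P))
    orbit_pair.
Proof.
  rewrite prod_open_SO3_r, prod_open_ball.
  apply (embedding_of_cont (ProdBS P SO3BS) (ProdBS P P) orbit_pair transporter).
  - apply transporter_orbit_pair.
  - intros p. apply cont_pair; [apply cont_fst|].
    apply (cont_comp (ProdBS P SO3BS) (ProdBS SO3BS P) P (fun p => (snd p, fst p))
             (fun p => act (fst p) (snd p))); [|apply act_cont].
    apply cont_pair; [apply cont_snd | apply cont_fst].
  - intros y.
    assert (Hfst : cont (SubBS (ProdBS P P) (image_of orbit_pair)) P
                     (fun y => fst (proj1_sig y)) y)
      by (apply (cont_comp _ (ProdBS P P)); [apply cont_proj1 | apply cont_fst]).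
    assert (Hsnd : cont (SubBS (ProdBS P P) (image_of orbit_pair)) P
                     (fun y => snd (proj1_sig y)) y)
      by (apply (cont_comp _ (ProdBS P P)); [apply cont_proj1 | apply cont_snd]).
    apply cont_pair; auto.
    apply cont_rot_mul; [|apply cont_rot_inv]; eapply cont_comp; eauto.
Qed.

Theorem equivariant_frame_principal :
  principal_SO3_bundle (ball_open P) (quot_open (ball_open P) q) act q.
Proof.
  split; [|split].
  - rewrite prod_open_SO3_l. apply continuous_of_cont, act_cont.
  - apply orbit_pair_embedding.
  - apply locally_trivial_of_trivial; [|apply equivariant_frame_trivial].
    intros x _; exists 1; split; [lra | tauto].
Qed.

Theorem equivariant_frame_bundle :
  principal_SO3_bundle (ball_open P) (quot_open (ball_open P) q) act q /\
  trivial_SO3_bundle (ball_open P) (quot_open (ball_open P) q) act q.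
Proof. split; [apply equivariant_frame_principal | apply equivariant_frame_trivial]. Qed.

End EquivariantFrame.

(** Molecular configurations as an SO(3)-space *)

Lemma rot_conf_mul n (A B : SO3) (x : Conf n) :
  rot_conf (rot_mul A B) x = rot_conf A (rot_conf B x).
Proof. apply functional_extensionality; intros i; apply mat_vec_mul. Qed.

Lemma rot_conf_one n (x : Conf n) : rot_conf rot_one x = x.
Proof. apply functional_extensionality; intros i; apply mat_vec_I3. Qed.

Lemma sum3_upto_mat_vec A k f :
  sum3_upto k (fun j => mat_vec A (f j)) = mat_vec A (sum3_upto k f).
Proof.
  induction k as [|k IH]; simpl.
  - symmetry; apply mat_vec_zero.
  - rewrite IH, mat_vec_add; reflexivity.
Qed.

Section MolecularGraph.
Variables (n : nat) (E : Idx n -> Idx n -> Prop) (c : Idx n -> nat)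
  (L : Idx n -> Idx n -> R) (Th : Idx n -> Idx n -> Idx n -> R).

Definition CPBS : BallSpace := SubBS (ConfBS n) (in_CP n E c L Th).

Lemma CP_open_ball : CP_open n E c L Th = ball_open CPBS.
Proof. exact (sub_open_ball (ConfBS n) (in_CP n E c L Th)). Qed.

Lemma rot_in_CP (A : SO3) (x : Conf n) : in_CP n E c L Th x -> in_CP n E c L Th (rot_conf A x).
Proof.
  destruct A as [A HA]; unfold rot_conf; cbn.
  intros [[phi [H1 [H2 [H3 [H4 [H5 [H6 H7]]]]]]] Hs]. split.
  - exists (fun v w t => mat_vec A (phi v w t)). repeat split.
    + destruct (H1 v w H) as [-> _]; reflexivity.
    + destruct (H1 v w H) as [_ [-> _]]; reflexivity.
    + intros t Ht. destruct (H1 v w H) as [_ [_ K]]. rewrite K; auto.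
    + intros v w Hvw s Hs0 eps Heps. destruct (H2 v w Hvw s Hs0 eps Heps) as [d [Hd K]].
      exists d; split; auto. intros; rewrite so3_dist; auto.
    + intros; rewrite so3_dist; auto.
    + intros u u' Hu; apply H4, (so3_inj A); auto.
    + intros v w t u Hvw Ht He; apply H5; auto; apply (so3_inj A); auto.
    + intros v w t v' w' t' Hvw Hvw' Ht Ht' He; apply H6; auto; apply (so3_inj A); auto.
    + intros v w1 w2 H; rewrite so3_angle; auto.
  - unfold sum_idx in *.
    replace (ext_idx zero3 (fun i => scal3 (INR (c i)) (mat_vec A (x i))))
      with (fun j => mat_vec A (ext_idx zero3 (fun i => scal3 (INR (c i)) (x i)) j)).
    + rewrite sum3_upto_mat_vec, Hs; apply mat_vec_zero.
    + apply functional_extensionality; intros j; unfold ext_idx.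
      destruct (Compare_dec.lt_dec j n); [apply mat_vec_scal | apply mat_vec_zero].
Qed.

Definition cp_act (A : SO3) (x : CP n E c L Th) : CP n E c L Th :=
  exist _ (rot_conf A (proj1_sig x)) (rot_in_CP A _ (proj2_sig x)).

Lemma cp_act_one x : cp_act rot_one x = x.
Proof. apply sig_eq, rot_conf_one. Qed.

Lemma cp_act_mul g h x : cp_act g (cp_act h x) = cp_act (rot_mul g h) x.
Proof. apply sig_eq; symmetry; apply rot_conf_mul. Qed.

Lemma cont_cp_point (x : CPBS) i : cont CPBS R3BS (fun y : CPBS => proj1_sig y i) x.
Proof.
  apply (cont_comp CPBS (ConfBS n) R3BS (@proj1_sig _ _) (fun y => y i));
    [apply cont_proj1 | apply cont_eval].
Qed.

Lemma cont_cp_act p : cont (ProdBS SO3BS CPBS) CPBS (fun p => cp_act (fst p) (snd p)) p.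
Proof.
  apply cont_into_sub, cont_conf; intros i.
  apply (cont_mat_vec _ _ (fun q : ProdBS SO3BS CPBS => proj1_sig (fst q))
                          (fun q : ProdBS SO3BS CPBS => proj1_sig (snd q) i)).
  - apply cont_rot_val, cont_fst.
  - apply (cont_comp (ProdBS SO3BS CPBS) CPBS R3BS snd (fun y : CPBS => proj1_sig y i));
      [apply cont_snd | apply cont_cp_point].
Qed.

Lemma qmap_onto (b : Cint n E c L Th) : exists x, qmap E c L Th x = b.
Proof.
  destruct b as [O [x ->]]. exists x. apply sig_eq; reflexivity.
Qed.

Lemma qmap_fibres x y :
  qmap E c L Th x = qmap E c L Th y <-> exists g, y = cp_act g x.
Proof.
  split.
  - intros Hq. assert (Hy : orbit E c L Th y y) by (exists rot_one; symmetry; apply rot_conf_one).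
    unfold qmap in Hq. injection Hq as Hq. rewrite <- Hq in Hy.
    destruct Hy as [g Hg]. exists g. apply sig_eq, Hg.
  - intros [g ->]. apply sig_eq; cbn.
    apply functional_extensionality; intros z; apply propositional_extensionality.
    unfold orbit; cbn. split.
    + intros [A HA]. exists (rot_mul A (rot_inv g)).
      rewrite HA, !rot_conf_mul, <- (rot_conf_mul _ (rot_inv g)), rot_mul_inv_l, rot_conf_one.
      reflexivity.
    + intros [A HA]. exists (rot_mul A g). rewrite HA, rot_conf_mul; reflexivity.
Qed.

Variables (v w1 w2 : Idx n).
Hypotheses (HM : is_molecular_graph n E c L Th) (Hin : in_E2 E v w1 w2)
  (Hpi : Th v w1 w2 <> PI).

Definition bond_frame (x : Conf n) : Mat3 := frame (sub3 (x w1) (x v)) (sub3 (x w2) (x v)).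

Lemma bonds_span_plane x : in_CP n E c L Th x ->
  norm3 (sub3 (x w1) (x v)) <> 0 /\ norm3 (cross3 (sub3 (x w1) (x v)) (sub3 (x w2) (x v))) <> 0.
Proof.
  intros [[phi [_ [_ [_ [Hinj [_ [_ Hang]]]]]]] _].
  destruct HM as [Hirr [_ [_ HTh]]]. destruct Hin as [H1 [H2 _]].
  assert (Hbond : forall w, E v w -> sub3 (x w) (x v) <> zero3).
  { intros w Hw Hz. apply sub3_zero, Hinj in Hz. subst w; exact (Hirr v Hw). }
  split.
  - intros Hz; apply (Hbond w1 H1), norm3_zero, Hz.
  - pose proof (Hang v w1 w2 Hin) as Hangle; unfold angle3 in Hangle.
    destruct (HTh v w1 w2 Hin) as [[Hpos _] _].
    apply cross3_nonzero; try apply Hbond; auto; rewrite Hangle; lra.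
Qed.

Definition cp_frame (x : CP n E c L Th) : SO3 :=
  exist _ (bond_frame (proj1_sig x))
    (let (H1, H2) := bonds_span_plane _ (proj2_sig x) in frame_SO3 _ _ H1 H2).

Lemma cp_frame_equiv g x : cp_frame (cp_act g x) = rot_mul g (cp_frame x).
Proof.
  apply sig_eq; cbn. unfold bond_frame, rot_conf. rewrite <- !mat_vec_sub.
  apply frame_equiv, proj2_sig.
Qed.

Lemma cont_cp_frame x : cont CPBS SO3BS cp_frame x.
Proof.
  destruct (bonds_span_plane _ (proj2_sig x)) as [N1 N2].
  apply cont_into_sub. unfold cp_frame, bond_frame; cbn.
  apply (cont_frame CPBS x (fun y : CPBS => sub3 (proj1_sig y w1) (proj1_sig y v))
                           (fun y : CPBS => sub3 (proj1_sig y w2) (proj1_sig y v)));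
    auto; apply cont_sub3; apply cont_cp_point.
Qed.

End MolecularGraph.

Theorem mainTheorem3 (n : nat) (E : Idx n -> Idx n -> Prop) (c : Idx n -> nat)
    (L : Idx n -> Idx n -> R) (Th : Idx n -> Idx n -> Idx n -> R)
    (HM : is_molecular_graph n E c L Th)
    (Hangle : exists v w1 w2, in_E2 E v w1 w2 /\ Th v w1 w2 <> PI) :
  exists act : SO3 -> CP n E c L Th -> CP n E c L Th,
    (forall A x, proj1_sig (act A x) = rot_conf A (proj1_sig x)) /\
    principal_SO3_bundle (CP_open n E c L Th) (Cint_open n E c L Th) act (qmap E c L Th) /\
    trivial_SO3_bundle (CP_open n E c L Th) (Cint_open n E c L Th) act (qmap E c L Th).
Proof.
  destruct Hangle as [v [w1 [w2 [Hin Hpi]]]].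
  exists (cp_act n E c L Th). split; [reflexivity|].
  unfold Cint_open. rewrite CP_open_ball.
  apply (equivariant_frame_bundle (CPBS n E c L Th) _ (qmap E c L Th) (cp_act n E c L Th)
           (cp_frame n E c L Th v w1 w2 HM Hin Hpi)).
  - apply cont_cp_act.
  - apply cp_act_one.
  - apply cp_act_mul.
  - apply qmap_onto.
  - apply qmap_fibres.
  - apply cont_cp_frame.
  - apply cp_frame_equiv.
Qed.
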